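(* Let $(G,\boldsymbol{\gamma})$ be a reflection-$(2,2)$ graph with symmetric lift $(\tilde G,\varphi)$. Then for a generic assignment of directions $\vec d$, the reflection direction network $(\tilde G,\varphi,\vec d)$ has only collapsed realizations.
   Context: A colored graph $(G,\boldsymbol{\gamma})$ is a finite directed multigraph $G$ (self-loops and parallel edges allowed) with a color $\gamma_{ij}\in\mathbb{Z}/2\mathbb{Z}$ on each edge. $\rho:H_1(G,\mathbb{Z})\to\mathbb{Z}/2\mathbb{Z}$ sends a cycle to the sum of its edge colors; the $\rho$-image of a subgraph is the image of its cycles, trivial if $\{0\}$. For a subgraph $G'$: $n',m'$ are its numbers of vertices and edges, $c'$ (resp. $c'_0$) the number of its connected components with non-trivial (resp. trivial) $\rho$-image. $(G,\boldsymbol{\gamma})$ with $n$ vertices and $m$ edges is a reflection-$(2,2)$ graph if $m=2n-1$ and every subgraph satisfies $m'\le 2n'-c'-2c'_0$. The lift $(\tilde G,\varphi)$ has vertices $\tilde i_\gamma$ ($i\in V(G),\gamma\in\mathbb{Z}/2\mathbb{Z}$), edges $\tilde i_\gamma\tilde j_{\gamma+\gamma_{ij}}$ for each edge $ij$, and $\varphi(\tilde i_\gamma)=\tilde i_{\gamma+1}$. Let $\Phi(1)$ be the reflection $(x,y)\mapsto(-x,y)$ and $\Phi(0)$ the identity. A reflection direction network $(\tilde G,\varphi,\vec d)$ assigns a vector $\vec d_{ij}\in\mathbb{R}^2$ to each edge $ij$ of $G$; its realizations are point sets $\vec p_{\tilde i_\gamma}=\Phi(\gamma)\vec p_i$ determined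 by points $\vec p_i\in\mathbb{R}^2$ ($i\in V(G)$) satisfying $\langle\Phi(\gamma_{ij})\vec p_j-\vec p_i,\vec d_{ij}^\perp\rangle=0$ for all edges $ij$ of $G$, $\vec d^\perp$ denoting rotation by $\pi/2$. A realization is collapsed if all vertices of $\tilde G$ are at the same point. A property holds for generic directions if it holds for all $\vec d\in\mathbb{R}^{2m}$ outside a proper algebraic subset. *)

From HB Require Import structures.
From mathcomp Require Import all_boot all_order all_algebra.
From mathcomp Require Import mpoly.
From mathcomp Require Import reals.
From Stdlib Require Import ClassicalEpsilon.

Set Implicit Arguments.
Unset Strict Implicit.
Unset Printing Implicit Defensive.

Import GRing.Theory Num.Theory.
Local Open Scope ring_scope.

(* A colored graph with n vertices ('I_n) and m edges ('I_m): edge e goes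
   from [src e] to [tgt e] and has color [col e] in Z/2Z, encoded as bool
   (false = 0, true = 1, addition = xor). *)

Section ColoredGraph.
Variables (n m : nat) (src tgt : 'I_m -> 'I_n) (col : 'I_m -> bool).

Definition step_tail (s : 'I_m * bool) : 'I_n := if s.2 then src s.1 else tgt s.1.
Definition step_head (s : 'I_m * bool) : 'I_n := if s.2 then tgt s.1 else src s.1.

Fixpoint is_walk (x y : 'I_n) (w : seq ('I_m * bool)) : bool :=
  match w with
  | [::] => x == y
  | s :: w' => (step_tail s == x) && is_walk (step_head s) y w'
  end.

(* rho of a closed walk (its class in H_1): sum of the colors of its edges. *)
Definition walk_color (w : seq ('I_m * bool)) : bool :=
  foldr (fun s b => col s.1 (+) b) false w.

Definition is_subgraph (V' : {set 'I_n}) (E' : {set 'I_m}) : Prop :=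
  forall e, e \in E' -> (src e \in V') /\ (tgt e \in V').

Definition sadj (E' : {set 'I_m}) : rel 'I_n :=
  fun u v => [exists e in E', ((src e == u) && (tgt e == v))
                           || ((src e == v) && (tgt e == u))].

Definition components (V' : {set 'I_n}) (E' : {set 'I_m}) : {set {set 'I_n}} :=
  [set [set y | connect (sadj E') x y] | x in V'].

(* A component C of the subgraph with edges E' has trivial rho-image iff
   every cycle (closed walk in the subgraph based in C) has color sum 0. *)
Definition trivial_rho (E' : {set 'I_m}) (C : {set 'I_n}) : Prop :=
  forall x w, x \in C -> is_walk x x w -> all (fun s => s.1 \in E') w ->
    walk_color w = false.

Definition trivial_rhob (E' : {set 'I_m}) (C : {set 'I_n}) : bool :=
  if excluded_middle_informative (trivial_rho E' C) then true else false.

Definition c0 (V' : {set 'I_n}) (E' : {set 'I_m}) : nat :=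
  #|[set C in components V' E' | trivial_rhob E' C]|.
Definition c1 (V' : {set 'I_n}) (E' : {set 'I_m}) : nat :=
  #|[set C in components V' E' | ~~ trivial_rhob E' C]|.

(* reflection-(2,2) graph: m = 2n - 1 and m' <= 2n' - c' - 2c'_0 for every
   subgraph (the inequality is written additively to avoid nat truncation). *)
Definition reflection22 : Prop :=
  m.+1 = (2 * n)%N /\
  forall (V' : {set 'I_n}) (E' : {set 'I_m}), is_subgraph V' E' ->
    (#|E'| + c1 V' E' + 2 * c0 V' E' <= 2 * #|V'|)%N.

End ColoredGraph.

Section Realizations.
Variable R : realType.

Definition Phi (g : bool) (p : R * R) : R * R := if g then (- p.1, p.2) else p.

Definition perp (d : R * R) : R * R := (- d.2, d.1).

Definition dotR2 (u v : R * R) : R := u.1 * v.1 + u.2 * v.2.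

Variables (n m : nat) (src tgt : 'I_m -> 'I_n) (col : 'I_m -> bool).

(* p : 'I_n -> R^2 gives a realization of the reflection direction network
   with directions d : 'I_m -> R^2 (lifted points p_{i~_g} = Phi g (p i)). *)
Definition is_realization (d : 'I_m -> R * R) (p : 'I_n -> R * R) : Prop :=
  forall e, dotR2 (Phi (col e) (p (tgt e)) - p (src e)) (perp (d e)) = 0.

Definition lift_point (p : 'I_n -> R * R) (i : 'I_n) (g : bool) : R * R := Phi g (p i).

Definition collapsed (p : 'I_n -> R * R) : Prop :=
  forall i j g h, lift_point p i g = lift_point p j h.

Definition dirs_of (v : 'I_(m + m) -> R) : 'I_m -> R * R :=
  fun e => (v (lshift m e), v (rshift m e)).

(* a property of direction vectors holds generically: it holds outside the
   zero set of some nonzero polynomial in the 2m coordinates (every proper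
   algebraic subset of R^{2m} is contained in such a zero set). *)
Definition generic_dirs (P : ('I_m -> R * R) -> Prop) : Prop :=
  exists f : {mpoly R[m + m]}, f != 0 /\
    forall v : 'I_(m + m) -> R, f.@[v] != 0 -> P (dirs_of v).

End Realizations.

(* Once the translation along the y-axis (the mirror of the reflection) is
   killed by normalising the y-coordinate of one vertex, the realizations are
   the row kernel of a square matrix whose entries are linear in the
   directions, so only collapsed realizations exist exactly where a polynomial,
   its determinant, does not vanish; it suffices to find one direction
   assignment where it is non-zero.  The x-coordinates enter the equations
   through the signed incidence vectors (the sign being the colour of the
   edge), the y-coordinates through the ordinary ones.  In the kernel of the
   former |x| is constant on components and x vanishes on those with
   non-trivial rho-image; in the kernel of the latter y is constant on
   components.  Hence the reflection-(2,2) counts give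
   |A| <= rk_x(A) + rk_y(A) for every edge set A, and Edmonds' matroid
   partition theorem splits the edges into a set S of full signed-incidence
   rank n and a complement of full graphic rank n - 1.  Vertical directions
   on S and horizontal ones elsewhere decouple the system into two
   non-singular ones. *)

From HB Require Import structures.
From mathcomp Require Import all_boot all_order all_algebra.
From mathcomp Require Import mpoly reals.
From mathcomp Require Import zify ring.
From Stdlib Require Import ClassicalEpsilon.

Set Implicit Arguments.
Unset Strict Implicit.
Unset Printing Implicit Defensive.

Section MatroidPartition.
Variable T : finType.
Implicit Types (r : {set T} -> nat) (A B E : {set T}) (e x : T).

Definition matroid_rank r :=
  [/\ r set0 = 0,
      {homo r : A B / A \subset B >-> (A <= B)%N},
      (forall A x, r (x |: A) <= (r A).+1) &
      (forall A B, r (A :|: B) + r (A :&: B) <= r A + r B)].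

Definition contract r e A := r (e |: A) - r [set e].

Definition edmonds_cond r1 r2 E := forall A, A \subset E -> #|A| <= r1 A + r2 A.

Definition partitionable r1 r2 E :=
  exists2 S : {set T}, S \subset E & r1 S = #|S| /\ r2 (E :\: S) = #|E :\: S|.

Lemma matroid_rank_contract r e : matroid_rank r -> matroid_rank (contract r e).
Proof.
case=> r0 rmono rU1 rsub; rewrite /contract.
have re A : r [set e] <= r (e |: A) by apply: rmono; rewrite subsetUl.
split=> [|A B AB|A x|A B]; first by rewrite setU0 subnn.
- by apply: leq_sub2r; apply: rmono; apply: setUS.
- by have := rU1 (e |: A) x; have := re A; rewrite setUCA; lia.
- have := rsub (e |: A) (e |: B); rewrite -setUUr -setUIr.
  by have := re A; have := re B; have := re (A :|: B); have := re (A :&: B); lia.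
Qed.

Lemma matroid_rank1 r x : matroid_rank r -> r [set x] <= 1.
Proof. by case=> r0 _ rU1 _; have := rU1 set0 x; rewrite setU0 r0. Qed.

Lemma matroid_rankU1 r A x : matroid_rank r -> r (x |: A) <= r A + r [set x].
Proof. by case=> _ _ _ rsub; have := rsub [set x] A; lia. Qed.

Lemma edmonds_condC r1 r2 E : edmonds_cond r1 r2 E -> edmonds_cond r2 r1 E.
Proof. by move=> h A /h; rewrite addnC. Qed.

Lemma partitionableC r1 r2 E : partitionable r1 r2 E -> partitionable r2 r1 E.
Proof.
case=> S SE [h1 h2]; exists (E :\: S); first exact: subsetDl.
by rewrite setDDr setDv set0U (setIidPr SE).
Qed.

Lemma partitionable_contract r1 r2 E e :
    matroid_rank r2 -> e \in E -> r2 [set e] = 1 ->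
  partitionable r1 (contract r2 e) (E :\ e) -> partitionable r1 r2 E.
Proof.
move=> [_ r2mono _ _] eE r2e [S SE [h1 h2]].
have eS : e \notin S by apply/negP => /(subsetP SE); rewrite !inE eqxx.
exists S; first exact: subset_trans SE (subsetDl _ _).
have -> : E :\: S = e |: (E :\ e :\: S).
  by apply/setP => x; rewrite !inE; case: eqP => [->|]; rewrite ?eE ?(negbTE eS).
split=> //; rewrite cardsU1 !inE eqxx /= -h2 /contract r2e.
have : r2 [set e] <= r2 (e |: (E :\ e :\: S)) by apply: r2mono; rewrite subsetUl.
lia.
Qed.

Lemma edmonds_cond_contract0 r1 r2 E e :
    matroid_rank r1 -> matroid_rank r2 -> e \in E -> r1 [set e] = 0 ->
    edmonds_cond r1 r2 E ->
  r2 [set e] = 1 /\ edmonds_cond r1 (contract r2 e) (E :\ e).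
Proof.
move=> M1 M2 eE r1e hE; have r2e : r2 [set e] = 1.
  have := hE [set e]; rewrite sub1set eE cards1 r1e => /(_ isT).
  by have := matroid_rank1 e M2; lia.
split=> // A /subsetD1P [AE eA].
have := hE (e |: A); rewrite subUset sub1set eE AE cardsU1 eA => /(_ isT).
by have := matroid_rankU1 A e M1; rewrite /contract r2e r1e; lia.
Qed.

(* If A violates the first condition and B the second, submodularity on
   (e |: A, A :|: B), (e |: B, A :|: B) and (A, B), together with the
   condition on e |: (A :|: B) and on A :&: B, gives |A| + |B| < |A| + |B|. *)
Lemma edmonds_cond_contract1 r1 r2 E e :
    matroid_rank r1 -> matroid_rank r2 -> e \in E ->
    r1 [set e] = 1 -> r2 [set e] = 1 -> edmonds_cond r1 r2 E ->
  edmonds_cond (contract r1 e) r2 (E :\ e) \/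
  edmonds_cond r1 (contract r2 e) (E :\ e).
Proof.
move=> [_ _ _ sub1] [_ _ _ sub2] eE r1e r2e hE.
case: (boolP [forall A : {set T},
          (A \subset E :\ e) ==> (#|A| <= contract r1 e A + r2 A)]).
  by move=> /forallP hA; left=> A; apply/implyP.
move=> /forallPn [A]; rewrite negb_imply -ltnNge => /andP [/subsetD1P [AE eA] fA].
right=> B /subsetD1P [BE eB]; rewrite leqNgt; apply/negP => fB.
move: fA fB; rewrite /contract r1e r2e => fA fB.
have eAB : e \notin A :|: B by rewrite inE negb_or eA.
have := hE (e |: (A :|: B)); rewrite subUset sub1set eE subUset AE BE cardsU1 eAB.
move=> /(_ isT) hAB; have hIAB := hE (A :&: B) (subset_trans (subsetIl _ _) AE).
have U1 : (e |: A) :|: (A :|: B) = e |: (A :|: B).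
  by apply/setP => x; rewrite !inE; case: (x == e); case: (x \in A).
have U2 : (e |: B) :|: (A :|: B) = e |: (A :|: B).
  by apply/setP => x; rewrite !inE; case: (x == e); case: (x \in A); case: (x \in B).
have I1 : (e |: A) :&: (A :|: B) = A.
  apply/setP => x; rewrite !inE; case: (eqVneq x e) => [->|_] /=.
    by rewrite (negbTE eA) (negbTE eB).
  by case: (x \in A).
have I2 : (e |: B) :&: (A :|: B) = B.
  apply/setP => x; rewrite !inE; case: (eqVneq x e) => [->|_] /=.
    by rewrite (negbTE eA) (negbTE eB).
  by case: (x \in A); case: (x \in B).
have := sub1 (e |: A) (A :|: B); have := sub2 (e |: B) (A :|: B).
rewrite U1 I1 U2 I2; have := sub1 A B; have := sub2 A B; have := cardsUI A B.
lia.
Qed.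

Theorem matroid_partition r1 r2 E :
  matroid_rank r1 -> matroid_rank r2 -> edmonds_cond r1 r2 E ->
  partitionable r1 r2 E.
Proof.
have [k] := ubnP #|E|; elim: k => // k IH in r1 r2 E * => ltEk M1 M2 hE.
case: (set_0Vmem E) => [->|[e eE]].
  by case: M1 M2 => [r10 _ _ _] [r20 _ _ _]; exists set0; rewrite ?setD0 ?cards0.
have ltE : #|E :\ e| < k by move: ltEk; rewrite (cardsD1 e E) eE.
have contract2 : r2 [set e] = 1 -> edmonds_cond r1 (contract r2 e) (E :\ e) ->
    partitionable r1 r2 E.
  move=> r2e h; apply: partitionable_contract r2e _ => //.
  by apply: IH => //; apply: matroid_rank_contract.
have contract1 : r1 [set e] = 1 -> edmonds_cond (contract r1 e) r2 (E :\ e) ->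
    partitionable r1 r2 E.
  move=> r1e h; apply/partitionableC/(partitionable_contract M1 eE r1e).
  by apply/partitionableC/IH => //; apply: matroid_rank_contract.
have [r1e|r1e] : r1 [set e] = 0 \/ r1 [set e] = 1.
- by have := matroid_rank1 e M1; lia.
- by have [r2e h] := edmonds_cond_contract0 M1 M2 eE r1e hE; apply: contract2.
have [r2e|r2e] : r2 [set e] = 0 \/ r2 [set e] = 1.
- by have := matroid_rank1 e M2; lia.
- have [_ h] := edmonds_cond_contract0 M2 M1 eE r2e (edmonds_condC hE).
  by apply: contract1 => //; apply: edmonds_condC.
by case: (edmonds_cond_contract1 M1 M2 eE r1e r2e hE); [apply: contract1|apply: contract2].
Qed.

End MatroidPartition.

Import GRing.Theory Num.Theory.
Local Open Scope ring_scope.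

Lemma mulmx_castmx_eq0 (R : pzRingType) k p q r (v : 'M[R]_(k, p)) (M : 'M[R]_(p, q))
    (h : q = r) :
  (v *m castmx (erefl p, h) M == 0) = (v *m M == 0).
Proof. by case: r / h; rewrite castmx_id. Qed.

Section RankBounds.
Variables (R : fieldType) (n : nat).

Lemma mxrank_col_mx_notin k (W : 'M[R]_(k, n)) (w : 'rV[R]_n) :
  ~~ (w <= W)%MS -> \rank (col_mx W w) = (\rank W).+1.
Proof.
move=> wW; rewrite -(addsmxE W w).1; apply/eqP; rewrite eqn_leq.
have lt : (W < W + w)%MS.
  by rewrite ltmxE addsmxSl /=; apply: contra wW; apply: submx_trans (addsmxSr _ _).
rewrite rank_ltmx // andbT; apply: leq_trans (mxrank_adds_leqif W w).1 _.
by rewrite -[X in (_ <= X)%N]addn1 leq_add2l rank_leq_row.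
Qed.

Lemma rank_kernel_bound k (W : 'M[R]_(k, n)) (P : {set 'I_n}) :
    (forall c : 'cV[R]_n, W *m c = 0 -> {in P, forall p, c p 0 = 0} -> c = 0) ->
  (n <= \rank W + #|P|)%N.
Proof.
move=> hW; pose Sel := rowsub (enum_val : 'I_#|P| -> 'I_n) (1%:M : 'M[R]_n).
have : row_free (col_mx W Sel)^T.
  apply: inj_row_free => v /(congr1 trmx); rewrite trmx_mul trmxK trmx0 mul_col_mx.
  move=> /eqP; rewrite col_mx_eq0 => /andP [/eqP Wv /eqP Selv].
  apply: trmx_inj; rewrite trmx0; apply: hW => // p pP.
  move: Selv; rewrite mul_rowsub_mx mul1mx => /matrixP /(_ (enum_rank_in pP p) 0).
  by rewrite !mxE enum_rankK_in.
rewrite /row_free mxrank_tr => /eqP {1}<-.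
rewrite -(addsmxE W Sel).1; apply: leq_trans (mxrank_adds_leqif W Sel).1 _.
by rewrite leq_add2l rank_leq_row.
Qed.

End RankBounds.

Section RowRank.
Variables (R : fieldType) (m n : nat) (F : 'I_m -> 'rV[R]_n).
Implicit Types A B : {set 'I_m}.

Definition rows_on A : 'M[R]_(m, n) := \matrix_(e < m) (if e \in A then F e else 0).

Definition rowrank A := \rank (rows_on A).

Lemma rows_onS A B : A \subset B -> (rows_on A <= rows_on B)%MS.
Proof.
move=> AB; apply/row_subP => e; rewrite rowK; case: ifP => eA; last exact: sub0mx.
by have := row_sub e (rows_on B); rewrite rowK (subsetP AB _ eA).
Qed.

Lemma rows_onU A B : (rows_on (A :|: B) <= rows_on A + rows_on B)%MS.
Proof.
apply/row_subP => e; rewrite rowK inE; case: ifP => [/orP [eA|eB]|_]; last exact: sub0mx.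
  by apply: submx_trans (addsmxSl _ _); have := row_sub e (rows_on A); rewrite rowK eA.
by apply: submx_trans (addsmxSr _ _); have := row_sub e (rows_on B); rewrite rowK eB.
Qed.

Lemma rows_onU1 A x : (rows_on (x |: A) <= rows_on A + F x)%MS.
Proof.
apply/row_subP => e; rewrite rowK !inE; case: eqP => [->|_] /=; first exact: addsmxSr.
case: ifP => eA; last exact: sub0mx.
by apply: submx_trans (addsmxSl _ _); have := row_sub e (rows_on A); rewrite rowK eA.
Qed.

Lemma rows_on_mul_eq0 A (c : 'cV[R]_n) :
  rows_on A *m c = 0 <-> {in A, forall e, F e *m c = 0}.
Proof.
split=> [/row_matrixP h e eA | h]; first by have := h e; rewrite row_mul rowK eA row0.
by apply/row_matrixP => e; rewrite row_mul rowK row0; case: ifP => [/h|_]; rewrite ?mul0mx.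
Qed.

Lemma matroid_rank_rowrank : matroid_rank rowrank.
Proof.
rewrite /rowrank; split=> [|A B AB|A x|A B].
- have -> : rows_on set0 = 0 by apply/row_matrixP => e; rewrite rowK inE row0.
  exact: mxrank0.
- exact/mxrankS/rows_onS.
- apply: leq_trans (mxrankS (rows_onU1 A x)) _.
  apply: leq_trans (mxrank_adds_leqif _ _).1 _.
  by rewrite -[X in (_ <= X)%N]addn1 leq_add2l rank_leq_row.
- rewrite -(mxrank_sum_cap (rows_on A) (rows_on B)) leq_add ?mxrankS ?rows_onU //.
  by rewrite sub_capmx !rows_onS ?subsetIl ?subsetIr.
Qed.

End RowRank.

Section IncidenceRows.
Variables (R : pzRingType) (n m : nat) (src tgt : 'I_m -> 'I_n) (col : 'I_m -> bool).

Definition inc_row e : 'rV[R]_n := \row_i ((i == tgt e)%:R - (i == src e)%:R).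

Definition sinc_row e : 'rV[R]_n :=
  \row_i ((-1) ^+ col e * (i == tgt e)%:R - (i == src e)%:R).

Lemma sum_mul_delta (f : 'I_n -> R) j : \sum_i (i == j)%:R * f i = f j.
Proof.
by rewrite (bigD1 j) //= eqxx mul1r big1 ?addr0 // => i /negbTE ->; rewrite mul0r.
Qed.

Lemma sum_inc_row (f : 'I_n -> R) e :
  \sum_i inc_row e 0 i * f i = f (tgt e) - f (src e).
Proof. by under eq_bigr do rewrite mxE mulrBl; rewrite sumrB !sum_mul_delta. Qed.

Lemma sum_sinc_row (f : 'I_n -> R) e :
  \sum_i sinc_row e 0 i * f i = (-1) ^+ col e * f (tgt e) - f (src e).
Proof.
under eq_bigr do rewrite mxE mulrBl -mulrA.
by rewrite sumrB -mulr_sumr !sum_mul_delta.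
Qed.

Lemma inc_row_mul (c : 'cV[R]_n) e :
  inc_row e *m c = (c (tgt e) 0 - c (src e) 0)%:M.
Proof. by apply/matrixP => i j; rewrite !ord1 !mxE sum_inc_row. Qed.

Lemma sinc_row_mul (c : 'cV[R]_n) e :
  sinc_row e *m c = ((-1) ^+ col e * c (tgt e) 0 - c (src e) 0)%:M.
Proof. by apply/matrixP => i j; rewrite !ord1 !mxE sum_sinc_row. Qed.

Lemma inc_row_kernel (c : 'cV[R]_n) e :
  inc_row e *m c = 0 -> c (src e) 0 = c (tgt e) 0.
Proof.
by move=> /matrixP /(_ 0 0); rewrite !mxE sum_inc_row => /eqP; rewrite subr_eq0 => /eqP.
Qed.

Lemma sinc_row_kernel (c : 'cV[R]_n) e :
  sinc_row e *m c = 0 -> c (src e) 0 = (-1) ^+ col e * c (tgt e) 0.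
Proof.
by move=> /matrixP /(_ 0 0); rewrite !mxE sum_sinc_row => /eqP; rewrite subr_eq0 => /eqP.
Qed.

End IncidenceRows.

Lemma connect_sadj_eq (n m : nat) (src tgt : 'I_m -> 'I_n) (A : {set 'I_m})
    (U : Type) (g : 'I_n -> U) :
    {in A, forall e, g (src e) = g (tgt e)} ->
  forall a b, connect (sadj src tgt A) a b -> g a = g b.
Proof.
move=> hA a _ /connectP [p + ->]; elim: p a => //= c p IH a /andP [/existsP [e] + pc].
by rewrite -(IH _ pc) => /andP [eA /orP [] /andP [/eqP <- /eqP <-]]; rewrite hA.
Qed.

Lemma walk_sign (R : pzRingType) (n m : nat) (src tgt : 'I_m -> 'I_n)
    (col : 'I_m -> bool) (A : {set 'I_m}) (g : 'I_n -> R) :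
    {in A, forall e, g (src e) = (-1) ^+ col e * g (tgt e)} ->
  forall w x y, is_walk src tgt x y w -> all (fun s => s.1 \in A) w ->
  g y = (-1) ^+ walk_color col w * g x.
Proof.
move=> hA; elim=> [|[e b] w IH] x y /=; first by move=> /eqP ->; rewrite mul1r.
case/andP => /eqP <- wxy /andP [eA wA].
rewrite (IH _ _ wxy wA) /= addbC signr_addb -mulrA; congr (_ * _).
by case: b {wxy} => /=; rewrite (hA e eA) ?signrMK.
Qed.

Lemma trivial_rhobP (n m : nat) (src tgt : 'I_m -> 'I_n) (col : 'I_m -> bool)
    (A : {set 'I_m}) (C : {set 'I_n}) :
  reflect (trivial_rho src tgt col A C) (trivial_rhob src tgt col A C).
Proof. by rewrite /trivial_rhob; case: excluded_middle_informative; constructor. Qed.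

Lemma card_components (n m : nat) (src tgt : 'I_m -> 'I_n) (col : 'I_m -> bool)
    (V : {set 'I_n}) (E : {set 'I_m}) :
  #|components src tgt V E| = (c0 src tgt col V E + c1 src tgt col V E)%N.
Proof.
rewrite /c0 /c1 -(cardsID [set C | trivial_rhob src tgt col E C]).
by congr (_ + _)%N; apply: eq_card => C; rewrite !inE // andbC.
Qed.

Section ComponentBound.
Variables (R : fieldType) (n m : nat) (src tgt : 'I_m -> 'I_n) (A : {set 'I_m}).

Definition comp v : {set 'I_n} := [set y | connect (sadj src tgt A) v y].

Lemma comp_in_components v : comp v \in components src tgt setT A.
Proof. by apply: imset_f; rewrite inE. Qed.

Lemma rank_bound_components k (W : 'M[R]_(k, n)) (Q : {set {set 'I_n}}) :
    (forall c : 'cV[R]_n, W *m c = 0 -> forall v w,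
       connect (sadj src tgt A) v w -> c w 0 = 0 -> c v 0 = 0) ->
    (forall c : 'cV[R]_n, W *m c = 0 -> forall v, comp v \notin Q -> c v 0 = 0) ->
  (n <= \rank W + #|Q|)%N.
Proof.
move=> hconn hout; case: (posnP n) => [n0|n_gt0]; first by rewrite {1}n0.
pose rep (K : {set 'I_n}) := odflt (Ordinal n_gt0) [pick x in K].
have rep_comp v : connect (sadj src tgt A) v (rep (comp v)).
  by rewrite /rep; case: pickP => [x|/(_ v)]; rewrite !inE ?connect0.
apply: leq_trans (rank_kernel_bound (W := W) (P := rep @: Q) _) _; last first.
  by rewrite leq_add2l leq_imset_card.
move=> c Wc cP; apply/matrixP => v j; rewrite (ord1 j) mxE.
case: (boolP (comp v \in Q)) => vQ; last exact: hout.
by apply: hconn (rep_comp v) _ => //; apply: cP; apply: imset_f.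
Qed.

End ComponentBound.

Section IncidenceRanks.
Variables (R : fieldType) (n m : nat) (src tgt : 'I_m -> 'I_n).
Implicit Types A : {set 'I_m}.

Lemma rowrank_inc_ge A :
  (n <= rowrank (inc_row R src tgt) A + #|components src tgt setT A|)%N.
Proof.
apply: (rank_bound_components (src := src) (tgt := tgt) (A := A)).
  move=> c /rows_on_mul_eq0 Ac v w vw; have -> // : c v 0 = c w 0.
  by apply: (connect_sadj_eq (g := fun a => c a 0) _ vw) => e /Ac /inc_row_kernel.
by move=> c _ v; rewrite comp_in_components.
Qed.

Lemma rows_on_inc_ones A :
  rows_on (inc_row R src tgt) A *m (const_mx 1 : 'cV[R]_n) = 0.
Proof. by apply/rows_on_mul_eq0 => e _; rewrite inc_row_mul !mxE subrr raddf0. Qed.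

Lemma rowrank_inc_lt A : (0 < n)%N -> (rowrank (inc_row R src tgt) A < n)%N.
Proof.
move=> n_gt0; rewrite ltn_neqAle rank_leq_col andbT; apply/negP => full.
have := row_full_inj full (etrans (rows_on_inc_ones A) (esym (mulmx0 _ _))).
by move=> /matrixP /(_ (Ordinal n_gt0) 0); rewrite !mxE => /eqP; rewrite oner_eq0.
Qed.

Lemma row_full_inc_delta A (i0 : 'I_n) :
    rowrank (inc_row R src tgt) A = n.-1 ->
  row_full (col_mx (rows_on (inc_row R src tgt) A) (delta_mx 0 i0 : 'rV[R]_n)).
Proof.
move=> rkA; have n_gt0 : (0 < n)%N by apply: leq_ltn_trans (ltn_ord i0).
rewrite /row_full mxrank_col_mx_notin -/(rowrank _ _) ?rkA ?prednK //.
apply/negP => /submxP [D /(congr1 (mulmx^~ (const_mx 1 : 'cV[R]_n)))].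
rewrite -mulmxA rows_on_inc_ones mulmx0 -rowE => /matrixP /(_ 0 0).
by rewrite !mxE => /eqP; rewrite oner_eq0.
Qed.

End IncidenceRanks.

Section SignedIncidenceRanks.
Variables (R : numFieldType) (n m : nat) (src tgt : 'I_m -> 'I_n) (col : 'I_m -> bool).
Variable A : {set 'I_m}.

Lemma sinc_kernel_sign (c : 'cV[R]_n) :
    rows_on (sinc_row R src tgt col) A *m c = 0 ->
  {in A, forall e, c (src e) 0 = (-1) ^+ col e * c (tgt e) 0}.
Proof. by move=> /rows_on_mul_eq0 Ac e /Ac /sinc_row_kernel. Qed.

Lemma sinc_kernel_norm (c : 'cV[R]_n) v w :
    rows_on (sinc_row R src tgt col) A *m c = 0 ->
  connect (sadj src tgt A) v w -> `|c v 0| = `|c w 0|.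
Proof.
move=> /sinc_kernel_sign sgn; apply: (connect_sadj_eq (g := fun a => `|c a 0|)).
by move=> e /sgn ->; rewrite normrM normr_sign mul1r.
Qed.

Lemma rowrank_sinc_ge :
  (n <= rowrank (sinc_row R src tgt col) A + c0 src tgt col setT A)%N.
Proof.
apply: (rank_bound_components (src := src) (tgt := tgt) (A := A)) => c Ac.
  move=> v w /(sinc_kernel_norm Ac) vw /eqP.
  by rewrite -normr_eq0 -vw normr_eq0 => /eqP.
move=> v; rewrite inE comp_in_components /= => /trivial_rhobP nontriv.
apply/eqP/contraT => cv; exfalso; apply: nontriv => x w; rewrite inE => vx xx wA.
apply/negP => odd_w; move: cv; rewrite -normr_eq0 (sinc_kernel_norm Ac vx) normr_eq0.
have := walk_sign (g := fun a => c a 0) (sinc_kernel_sign Ac) xx wA.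
by rewrite odd_w expr1 mulN1r => /eqP; rewrite -addr_eq0 -mulr2n mulrn_eq0 /= => ->.
Qed.

End SignedIncidenceRanks.

Section Reflection22.
Variables (R : numFieldType) (n m : nat) (src tgt : 'I_m -> 'I_n) (col : 'I_m -> bool).

Lemma reflection22_edmonds :
  reflection22 src tgt col ->
  edmonds_cond (rowrank (sinc_row R src tgt col)) (rowrank (inc_row R src tgt)) setT.
Proof.
case=> _ hsub A _; have := hsub setT A (fun e _ => conj (in_setT _) (in_setT _)).
rewrite cardsT card_ord; have := rowrank_sinc_ge R src tgt col A.
have := rowrank_inc_ge R src tgt A; rewrite (card_components _ _ col).
(* identifies two copies of this rank reached through different coercion
   paths from numFieldType to fieldType, which lia would treat as distinct *)
set ri := rowrank (inc_row _ _ _) A; lia.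
Qed.

Lemma reflection22_split :
  reflection22 src tgt col ->
  exists S, rowrank (sinc_row R src tgt col) S = n /\
            rowrank (inc_row R src tgt) (~: S) = n.-1.
Proof.
move=> h22; have [hm _] := h22; have n_gt0 : (0 < n)%N by lia.
have [S _ [hS hSc]] := matroid_partition (matroid_rank_rowrank _)
  (matroid_rank_rowrank _) (reflection22_edmonds h22).
rewrite setTD in hSc; exists S.
have := rank_leq_col (rows_on (sinc_row R src tgt col) S); rewrite -/(rowrank _ _).
have := rowrank_inc_lt R src tgt (~: S) n_gt0.
by rewrite hS hSc; have := cardsC S; rewrite card_ord; lia.
Qed.

End Reflection22.

Section NetworkMatrix.
Variables (n m : nat) (src tgt : 'I_m -> 'I_n) (col : 'I_m -> bool) (i0 : 'I_n).

(* Rows: the x- then the y-coordinates of the vertices; columns: one per edge,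
   then one extra column fixing the y-coordinate of [i0]. *)
Definition network_mx (R : comNzRingType) (d : 'I_m -> R * R) : 'M[R]_(n + n, m + 1) :=
  row_mx (col_mx (\matrix_(i, e) (- (d e).2 * sinc_row R src tgt col e 0 i))
                 (\matrix_(i, e) ((d e).1 * inc_row R src tgt e 0 i)))
         (col_mx 0 (delta_mx i0 0)).

Lemma map_network_mx (R S : comNzRingType) (f : {rmorphism R -> S}) d :
  map_mx f (network_mx d) = network_mx (fun e => (f (d e).1, f (d e).2)).
Proof.
rewrite map_row_mx !map_col_mx map_mx0 map_delta_mx; congr (row_mx (col_mx _ _) _);
  apply/matrixP => i e; rewrite !mxE rmorphM ?rmorphN rmorphB ?rmorphM.
all: by rewrite ?rmorph_sign !rmorph_nat.
Qed.

Lemma eq_network_mx (R : comNzRingType) (d d' : 'I_m -> R * R) :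
  d =1 d' -> network_mx d = network_mx d'.
Proof.
by move=> dd'; congr (row_mx (col_mx _ _) _); apply/matrixP => i e; rewrite !mxE dd'.
Qed.

Lemma network_mx_edge (R : comNzRingType) d (x y : 'rV[R]_n) e :
  (row_mx x y *m network_mx d) 0 (lshift 1 e) =
  - (d e).2 * ((-1) ^+ col e * x 0 (tgt e) - x 0 (src e))
  + (d e).1 * (y 0 (tgt e) - y 0 (src e)).
Proof.
rewrite mul_mx_row mul_row_col row_mxEl !mxE -sum_sinc_row -sum_inc_row !mulr_sumr.
by congr (_ + _); apply: eq_bigr => i _; rewrite mxE mulrCA; congr (_ * _); apply: mulrC.
Qed.

Lemma network_mx_last (R : comNzRingType) d (x y : 'rV[R]_n) :
  (row_mx x y *m network_mx d) 0 (rshift m 0) = y 0 i0.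
Proof. by rewrite mul_mx_row row_mxEr mul_row_col mulmx0 add0r -colE mxE. Qed.

End NetworkMatrix.

Lemma dot_perp_Phi (R : realType) b (pt ps d : R * R) :
  dotR2 (Phi b pt - ps) (perp d) =
  - d.2 * ((-1) ^+ b * pt.1 - ps.1) + d.1 * (pt.2 - ps.2).
Proof. by case: b; rewrite /dotR2 /Phi /perp /=; ring. Qed.

Section NetworkSquare.
Variables (n m : nat) (src tgt : 'I_m -> 'I_n) (col : 'I_m -> bool) (i0 : 'I_n).
Hypothesis hmn : (m + 1 = n + n)%N.

Definition network_sq (R : comNzRingType) (d : 'I_m -> R * R) : 'M[R]_(n + n) :=
  castmx (erefl, hmn) (network_mx src tgt col i0 d).

Lemma realization_in_network_kernel (R : realType) d (p : 'I_n -> R * R) :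
    is_realization src tgt col d p ->
  row_mx (\row_i (p i).1) (\row_i ((p i).2 - (p i0).2)) *m network_mx src tgt col i0 d = 0.
Proof.
move=> hp; apply/rowP => k; rewrite -(splitK k); case: (split k) => [e|j] /=.
  rewrite network_mx_edge !mxE -(hp e) dot_perp_Phi; congr (_ + _ * _).
  by rewrite opprB addrA subrK.
by rewrite ord1 network_mx_last !mxE subrr.
Qed.

Lemma collapsed_of_network_det (R : realType) (d : 'I_m -> R * R) :
    \det (network_sq d) != 0 ->
  forall p, is_realization src tgt col d p -> collapsed p.
Proof.
move=> hdet p /realization_in_network_kernel; set v := row_mx _ _ => hv.
have : v == 0.
  apply: contraR hdet => nz; apply/det0P; exists v => //.
  by apply/eqP; rewrite /network_sq mulmx_castmx_eq0 hv.
rewrite /v row_mx_eq0 => /andP [/eqP/rowP x0 /eqP/rowP y0].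
have pE i : p i = (0, (p i0).2).
  have := x0 i; have := y0 i; rewrite !mxE => /eqP; rewrite subr_eq0 => /eqP <- <-.
  by case: (p i).
move=> i j g h; rewrite /lift_point (pE i) (pE j).
by case: g; case: h; rewrite /Phi ?oppr0.
Qed.

(* Vertical directions on S leave only the x-equations of S, horizontal ones
   on its complement only the y-equations. *)
Lemma network_det_neq0 (R : fieldType) (S : {set 'I_m}) (d : 'I_m -> R * R) :
    rowrank (sinc_row R src tgt col) S = n ->
    rowrank (inc_row R src tgt) (~: S) = n.-1 ->
    (forall e, d e = if e \in S then (0, 1) else (1, 0)) ->
  \det (network_sq d) != 0.
Proof.
move=> rkS rkSc dE; apply/negP => /det0P [v].
rewrite -(hsubmxK v); move: (lsubmx v) (rsubmx v) => x y {v} vnz.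
move=> /eqP; rewrite /network_sq mulmx_castmx_eq0 => /eqP /rowP hv.
have edge e : - (d e).2 * ((-1) ^+ col e * x 0 (tgt e) - x 0 (src e))
              + (d e).1 * (y 0 (tgt e) - y 0 (src e)) = 0.
  by rewrite -(network_mx_edge src tgt col i0) hv mxE.
have x0 : x^T = 0.
  apply: (@row_full_inj _ _ _ _ (rows_on (sinc_row R src tgt col) S)).
    by rewrite /row_full -/(rowrank _ _) rkS.
  rewrite mulmx0; apply/rows_on_mul_eq0 => e eS; rewrite sinc_row_mul !mxE.
  have := edge e; rewrite dE eS mul0r addr0 mulN1r => /eqP.
  by rewrite oppr_eq0 => /eqP ->; apply: raddf0.
have y0 : y^T = 0.
  apply: (row_full_inj (row_full_inc_delta i0 rkSc)).
  rewrite mulmx0 mul_col_mx -rowE; apply/eqP; rewrite col_mx_eq0.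
  apply/andP; split; apply/eqP.
    apply/rows_on_mul_eq0 => e; rewrite inE => eS; rewrite inc_row_mul !mxE.
    have := edge e; rewrite dE (negbTE eS) oppr0 mul0r add0r mul1r => ->.
    exact: raddf0.
  by apply/rowP => j; rewrite ord1 !mxE -(network_mx_last src tgt col i0 d x) hv mxE.
by move: vnz; rewrite -[x]trmxK -[y]trmxK x0 y0 !trmx0 row_mx0 eqxx.
Qed.

Definition network_poly (R : realType) : {mpoly R[m + m]} :=
  \det (network_sq (fun e => ('X_(lshift m e), 'X_(rshift m e)))).

Lemma network_poly_eval (R : realType) (v : 'I_(m + m) -> R) :
  (network_poly R).@[v] = \det (network_sq (dirs_of v)).
Proof.
rewrite /network_poly -det_map_mx /network_sq map_castmx map_network_mx.
by congr (\det (castmx _ _)); apply: eq_network_mx => e; rewrite /= !mevalXU.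
Qed.

End NetworkSquare.

Theorem proposition8 (R : realType) (n m : nat) (src tgt : 'I_m -> 'I_n)
    (col : 'I_m -> bool) :
  reflection22 src tgt col ->
  generic_dirs (fun d : 'I_m -> R * R =>
    forall p : 'I_n -> R * R, is_realization src tgt col d p -> collapsed p).
Proof.
move=> h22; have [hm _] := h22.
have hmn : (m + 1 = n + n)%N by lia.
have n_gt0 : (0 < n)%N by lia.
have [S [rkS rkSc]] := reflection22_split R h22.
pose v (k : 'I_(m + m)) : R :=
  match split k with inl e => (e \notin S)%:R | inr e => (e \in S)%:R end.
have dE e : dirs_of v e = if e \in S then (0, 1) else (1, 0).
  by rewrite /dirs_of /v (unsplitK (inl _ e)) (unsplitK (inr _ e)); case: (e \in S).
pose i0 := Ordinal n_gt0.
exists (network_poly src tgt col i0 hmn R); split.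
  apply: contraNneq (network_det_neq0 i0 hmn rkS rkSc dE) => h0.
  by rewrite -network_poly_eval h0 meval0.
by move=> w; rewrite network_poly_eval; apply: collapsed_of_network_det.
Qed.
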